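(* Let $G=G_1\times\cdots\times G_m$ be a direct product of virtually torsion-free groups. Suppose there exist $\alpha,\beta>0$ such that for every $i\in\{1,\dots,m\}$ and every finite $V_i\subset G_i$ such that $\langle V_i\rangle$ has exponential growth, $|V_i^n|\geqslant(\alpha|V_i|)^{\beta n}$ for every $n\in\mathbb{N}$. Then there exist $\alpha',\beta'>0$ such that for every finite $U\subset G$ at least one of the following holds: 1. $\langle U\rangle$ is contained in a direct product of the form $H_1\times H_2$, where $H_2$ does not have exponential growth and the restriction to $\langle U\rangle$ of the projection to $H_1$ is infinite-to-1; 2. $|U^n|\geqslant(\alpha'|U|)^{\beta' n}$ for every $n\in\mathbb{N}$.
   Context: For a finitely generated group $H$ with finite generating set $S$, $H$ has exponential growth if $\lim_{n\to\infty}|B_S(n)|^{1/n}>1$, where $B_S(n)$ is the word-metric ball; a group not assumed finitely generated does not have exponential growth if none of its finitely generated subgroups does. A homomorphism is infinite-to-1 if its kernel is infinite. $U^n=\{u_1\cdots u_n:u_i\in U\}$. *)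

From HB Require Import structures.
From mathcomp Require Import all_boot monoid finmap ssralg ssrnum.
From mathcomp Require Import all_classical all_reals exp Rstruct Rstruct_topology.
From mathcomp Require Import topology normedtype sequences.
From Stdlib Require Import Rdefinitions.

Set Implicit Arguments.
Unset Strict Implicit.
Unset Printing Implicit Defensive.

Local Open Scope group_scope.

Section Product.
Variables (m : nat) (Gs : 'I_m -> groupType).

Definition prodG := {dffun forall i : 'I_m, Gs i}.
HB.instance Definition _ := Choice.on prodG.

Definition prod_one : prodG := [ffun i => 1].
Definition prod_inv (x : prodG) : prodG := [ffun i => (x i)^-1].
Definition prod_mul (x y : prodG) : prodG := [ffun i => x i * y i].

Fact prod_mulA : associative prod_mul.
Proof. by move=> x y z; apply/ffunP => i; rewrite !ffunE mulgA. Qed.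
Fact prod_mul1 : left_id prod_one prod_mul.
Proof. by move=> x; apply/ffunP => i; rewrite !ffunE mul1g. Qed.
Fact prod_mulg1 : right_id prod_one prod_mul.
Proof. by move=> x; apply/ffunP => i; rewrite !ffunE mulg1. Qed.
Fact prod_mulV : left_inverse prod_one prod_inv prod_mul.
Proof. by move=> x; apply/ffunP => i; rewrite !ffunE mulVg. Qed.
Fact prod_mulgV : right_inverse prod_one prod_inv prod_mul.
Proof. by move=> x; apply/ffunP => i; rewrite !ffunE mulgV. Qed.

HB.instance Definition _ :=
  isGroup.Build prodG prod_mulA prod_mul1 prod_mulg1 prod_mulV prod_mulgV.
End Product.

Section Groups.
Variable G : groupType.
Local Open Scope classical_set_scope.

Definition is_subgroup (H : set G) : Prop :=
  H 1 /\ (forall x y, H x -> H y -> H (x * y)) /\ (forall x, H x -> H x^-1).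

Definition gen (A : set G) : set G :=
  [set x | forall H : set G, is_subgroup H -> A `<=` H -> H x].

Definition torsion_free (H : set G) : Prop :=
  forall x (n : nat), H x -> (0 < n)%N -> x ^+ n = 1 -> x = 1.

Definition finite_index (H : set G) : Prop :=
  exists s : seq G, forall g : G, exists2 t, t \in s & H (t^-1 * g).

Definition virtually_torsion_free : Prop :=
  exists H : set G, [/\ is_subgroup H, finite_index H & torsion_free H].

Local Open Scope fset_scope.

Definition fset_mul (A B : {fset G}) : {fset G} :=
  [fset x * y | x in A, y in B].

Fixpoint fset_pow (U : {fset G}) (n : nat) : {fset G} :=
  if n is n'.+1 then fset_mul U (fset_pow U n') else [fset 1].

Definition ball_gen (S : {fset G}) (n : nat) : {fset G} :=
  fset_pow (S `|` [fset x^-1 | x in S] `|` [fset 1]) n.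

Local Open Scope ring_scope.
Definition fg_exp_growth (S : {fset G}) : Prop :=
  exists l : R, 1 < l /\
    (fun n : nat => powR (#|` ball_gen S n|%:R : R) (n%:R)^-1) @ \oo --> l.
Local Close Scope ring_scope.

(* A (not necessarily finitely generated) subgroup H has exponential
   growth iff some finitely generated subgroup of it does. *)
Definition has_exp_growth (H : set G) : Prop :=
  exists S : {fset G}, (forall x, x \in S -> H x) /\ fg_exp_growth S.

End Groups.

Arguments fset_pow {G}.
Arguments gen {G}.

From HB Require Import structures.
From mathcomp Require Import all_boot monoid finmap ssralg ssrnum.
From mathcomp Require Import all_classical all_reals exp Rstruct Rstruct_topology.
From Stdlib Require Import Rdefinitions.
From mathcomp Require Import order archimedean topology normedtype sequences.

Set Implicit Arguments.
Unset Strict Implicit.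
Unset Printing Implicit Defensive.

Import Order.TTheory GRing.Theory Num.Theory.

(* Let V_i be the projection of U to G_i, I the set of coordinates where <V_i> has
   exponential growth, and H1, H2 the products of the <V_i> over I and over its
   complement, so that <U> lies in H1 x H2.  By Fekete's lemma the growth rate
   inf_n ln|B_S(n)|/n of a finite S is positive exactly when <S> grows
   exponentially, and the rate of a subset of a direct product is at most the sum
   of the rates of its projections; hence H2 has no exponential growth.  If
   <U> meets H2 in an infinite set we are in the first case.  Otherwise <U> /\ H2
   is a finite group, so it meets the product of torsion-free subgroups T_i of
   finite index trivially: an element of U is determined by its coordinates in I
   and by the T_i-cosets of its other coordinates.  Thus |U| <= prod_{i in I} |V_i|
   times B^(m - |I|), B bounding the indices, and once |U| is large this forces
   |U| <= |V_j|^(m+1) for some j in I; the growth of V_j, a homomorphic image of U,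
   then gives the second case with beta' = beta/(m+1). *)

Section ProductSets.
Variable G : groupType.
Implicit Types A B U T : {fset G}.
Local Open Scope group_scope.
Local Open Scope fset_scope.

Lemma fset_mulP A B x :
  reflect (exists a b, [/\ a \in A, b \in B & x = a * b]) (x \in fset_mul A B).
Proof.
apply: (iffP idP) => [/imfset2P [a aA [b bB ->]]|[a [b [aA bB ->]]]].
  by exists a, b.
exact: in_imfset2.
Qed.

Lemma card_fset_mul A B : (#|` fset_mul A B| <= #|` A| * #|` B|)%N.
Proof.
by rewrite /fset_mul unlock size_seq_fset (leq_trans (size_undup _)) ?size_allpairs.
Qed.

Lemma fset_mulA A B T : fset_mul A (fset_mul B T) = fset_mul (fset_mul A B) T.
Proof.
apply/fsetP => x; apply/fset_mulP/fset_mulP.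
  case=> a [y [aA /fset_mulP [b [c [bB cT ->]]] ->]].
  exists (a * b), c; rewrite mulgA; split => //.
  by apply/fset_mulP; exists a, b.
case=> y [c [/fset_mulP [a [b [aA bB ->]]] cT ->]].
exists a, (b * c); rewrite mulgA; split => //.
by apply/fset_mulP; exists b, c.
Qed.

Lemma fset_mul1 A : fset_mul [fset 1] A = A.
Proof.
apply/fsetP => x; apply/fset_mulP/idP => [[a [b [/fset1P -> bA ->]]]|xA].
  by rewrite mul1g.
by exists 1, x; rewrite fset11 mul1g.
Qed.

Lemma fset_powD U m n : fset_pow U (m + n) = fset_mul (fset_pow U m) (fset_pow U n).
Proof. by elim: m => [|m IHm] /=; rewrite ?fset_mul1 // IHm fset_mulA. Qed.

Lemma card_fset_powD U m n :
  (#|` fset_pow U (m + n)| <= #|` fset_pow U m| * #|` fset_pow U n|)%N.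
Proof. by rewrite fset_powD card_fset_mul. Qed.

Lemma fset_powS A B n : A `<=` B -> fset_pow A n `<=` fset_pow B n.
Proof.
move=> /fsubsetP AB; elim: n => [|n IHn] //=; apply/fsubsetP => x.
case/fset_mulP => a [y [aA yA ->]]; apply/fset_mulP.
by exists a, y; split; [exact: AB | exact: (fsubsetP IHn)|].
Qed.

Lemma expg_in_fset_pow U u n : u \in U -> u ^+ n \in fset_pow U n.
Proof.
move=> uU; elim: n => [|n IHn] /=; first by rewrite expg0 fset11.
by rewrite expgS; apply/fset_mulP; exists u, (u ^+ n).
Qed.

Lemma fset_pow_subset U m n : 1 \in U -> (m <= n)%N -> fset_pow U m `<=` fset_pow U n.
Proof.
move=> U1 /subnK <-; rewrite fset_powD; apply/fsubsetP => x xm.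
apply/fset_mulP; exists 1, x; rewrite mul1g; split => //.
by rewrite -(@expg1n _ (n - m)); apply: expg_in_fset_pow.
Qed.

Lemma card_fset_pow_gt0 U n : 1 \in U -> (0 < #|` fset_pow U n|)%N.
Proof.
move=> U1; rewrite cardfs_gt0; apply/fset0Pn; exists 1.
by rewrite -(@expg1n _ n) expg_in_fset_pow.
Qed.

End ProductSets.

Section Subgroups.
Variable G : groupType.
Local Open Scope group_scope.
Local Open Scope classical_set_scope.

Lemma is_subgroup_gen (A : set G) : is_subgroup (gen A).
Proof.
split; first by move=> H [].
split=> [x y gx gy H Hsub AH|x gx H Hsub AH]; have [_ [HM HV]] := Hsub.
  by apply: HM; [exact: gx | exact: gy].
by apply: HV; exact: gx.
Qed.

Lemma subset_gen (A : set G) : A `<=` gen A.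
Proof. by move=> x Ax H _; apply. Qed.

Lemma gen_subG (A H : set G) : is_subgroup H -> A `<=` H -> gen A `<=` H.
Proof. by move=> Hsub AH x; apply. Qed.

Lemma is_subgroup1 : is_subgroup [set 1 : G].
Proof. by split=> //; split=> [x y -> ->|x ->]; rewrite ?mulg1 ?invg1. Qed.

Lemma is_subgroupI (H K : set G) :
  is_subgroup H -> is_subgroup K -> is_subgroup (H `&` K).
Proof.
move=> [H1 [HM HV]] [K1 [KM KV]]; split=> //.
by split=> [x y [Hx Kx] [Hy Ky]|x [Hx Kx]]; split; auto.
Qed.

Lemma fset_pow_sub_subgroup (H : set G) (U : {fset G}) n :
  is_subgroup H -> [set x | x \in U] `<=` H -> [set x | x \in fset_pow U n] `<=` H.
Proof.
move=> [H1 [HM _]] UH; elim: n => [|n IHn] x /=; first by move/fset1P ->.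
by case/fset_mulP => a [b [aU bU ->]]; apply: HM; [exact: UH | exact: IHn].
Qed.

Lemma finite_subgroup_torsion (K : set G) z :
  is_subgroup K -> finite_set K -> K z -> exists2 k, (0 < k)%N & z ^+ k = 1.
Proof.
move=> [K1 [KM _]] /finite_fsetP [F eKF] Kz.
have powF j : z ^+ j \in F.
  suff : [set` F] (z ^+ j) by [].
  rewrite -eKF.
  by elim: j => [|j IHj]; rewrite ?expg0 // expgS; apply: KM.
pose pow (j : 'I_(#|` F|).+1) : F := FSetSub (powF j).
have : ~~ injectiveb pow.
  by apply/injectiveP => /leq_card; rewrite card_ord -cardfE ltnn.
case/injectivePn => i [j neq_ij /(congr1 val) eq_ij].
have {}eq_ij : z ^+ i = z ^+ j := eq_ij.
wlog lt_ij : i j neq_ij eq_ij / (i < j)%N.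
  move=> IH; case: (ltngtP i j) => [|ji|/val_inj eqij]; first exact: IH.
  - by apply: (IH j i) => //; rewrite eq_sym.
  - by rewrite eqij eqxx in neq_ij.
exists (j - i)%N; first by rewrite subn_gt0.
by rewrite expgnFr ?eq_ij ?mulgV // ltnW.
Qed.

End Subgroups.

Section Morphisms.
Variables (G G' : groupType) (f : G -> G').
Hypothesis fM : forall x y, f (x * y)%g = (f x * f y)%g.
Hypothesis f1 : f 1%g = 1%g.
Local Open Scope fset_scope.

Lemma imfset_fset_mul (A B : {fset G}) :
  f @` fset_mul A B = fset_mul (f @` A) (f @` B).
Proof.
apply/fsetP => y; apply/imfsetP/fset_mulP => /=.
  case=> x /fset_mulP [a [b [aA bB ->]]] ->.
  by exists (f a), (f b); rewrite fM; split => //; exact: in_imfset.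
case=> _ [_ [/imfsetP [a /= aA ->] /imfsetP [b /= bB ->] ->]].
by exists (a * b)%g; [apply/fset_mulP; exists a, b | rewrite fM].
Qed.

Lemma fset_pow_imfset (U : {fset G}) n : fset_pow (f @` U) n = f @` fset_pow U n.
Proof.
elim: n => [|n IHn] /=; first by rewrite imfset_fset1 f1.
by rewrite IHn imfset_fset_mul.
Qed.

Lemma card_fset_pow_imfset (U : {fset G}) n :
  (#|` fset_pow (f @` U) n| <= #|` fset_pow U n|)%N.
Proof.
by rewrite fset_pow_imfset (leq_trans (leq_imfset_card _ _ _)).
Qed.

End Morphisms.

Local Open Scope classical_set_scope.
Local Open Scope ring_scope.

Definition inf_ratio (a : nat -> R) : R :=
  inf [set a k / k%:R | k in [set k : nat | (0 < k)%nat]].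

Section Fekete.
Variable a : nat -> R.
Hypothesis a_ge0 : forall n, 0 <= a n.
Hypothesis a_nondecr : {homo a : m n / (m <= n)%nat >-> m <= n}.
Hypothesis a_subadd : forall m n, a (m + n) <= a m + a n.

Let has_inf_ratios : has_inf [set a k / k%:R | k in [set k : nat | (0 < k)%nat]].
Proof.
split; first by exists (a 1 / 1); exists 1%nat.
by exists 0 => _ [k _ <-]; rewrite divr_ge0.
Qed.

Lemma inf_ratio_le k : (0 < k)%nat -> inf_ratio a <= a k / k%:R.
Proof. by move=> k0; apply: ge_inf; [case: has_inf_ratios | exists k]. Qed.

Lemma subadd_mulr j k : a (j.+1 * k) <= j.+1%:R * a k.
Proof.
elim: j => [|j IHj]; first by rewrite mul1n mul1r.
by rewrite mulSn (le_trans (a_subadd _ _)) // -natr1 mulrDl mul1r addrC lerD2r.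
Qed.

Lemma ratio_le k n : (0 < k)%nat -> (0 < n)%nat ->
  a n / n%:R <= a k / k%:R + a k / n%:R.
Proof.
move=> k0 n0; have n0' : 0 < n%:R :> R by rewrite ltr0n.
have ninv_ge0 : 0 <= n%:R^-1 :> R by rewrite invr_ge0 ltW.
have an_le : a n <= (n %/ k).+1%:R * a k.
  by apply: le_trans (subadd_mulr _ _); apply/a_nondecr/ltnW; rewrite ltn_ceil.
have q_le : (n %/ k)%:R / n%:R <= k%:R^-1 :> R.
  rewrite ler_pdivrMr // mulrC ler_pdivlMr ?ltr0n // -natrM ler_nat.
  exact: leq_divM.
apply: (le_trans (ler_wpM2r ninv_ge0 an_le)).
rewrite -natr1 mulrDl mul1r mulrDl lerD2r mulrAC [a k / _]mulrC.
exact: ler_wpM2r.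
Qed.

Lemma cvg_inf_ratio : (fun n => a n / n%:R) @ \oo --> inf_ratio a.
Proof.
apply/(@cvgrPdist_le _ R^o) => e e0.
have e20 : 0 < e / 2 by rewrite divr_gt0.
have [_ [k k0 <-] ak_lt] := inf_adherent e20 has_inf_ratios.
pose N := Num.bound (a k / (e / 2)).
exists (maxn N 1) => // n /=; rewrite geq_max => /andP[Nn n0].
rewrite distrC ger0_norm ?subr_ge0 ?inf_ratio_le // lerBlDl.
apply: (le_trans (ratio_le k0 n0)); rewrite [e]splitr addrA lerD ?ltW //.
have n0' : 0 < n%:R :> R by rewrite ltr0n.
rewrite ltr_pdivrMr // -ltr_pdivrMl // mulrC.
have ak_ge0 : 0 <= a k / (e / 2) by rewrite divr_ge0 // ltW.
by apply: (lt_le_trans (archi_boundP ak_ge0)); rewrite ler_nat.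
Qed.

End Fekete.

Section GrowthRate.
Variable G : groupType.

Definition growth_rate (S : {fset G}) : R :=
  inf_ratio (fun n => ln (#|` ball_gen S n|%:R)).

Lemma ball_gen_sub_subgroup (H : set G) (S : {fset G}) n :
  is_subgroup H -> [set x | x \in S] `<=` H -> [set x | x \in ball_gen S n] `<=` H.
Proof.
move=> Hsub SH; apply: fset_pow_sub_subgroup => // x /=.
have [H1 [_ HV]] := Hsub.
by rewrite !inE => /orP[/orP[/SH //|/imfsetP[y /SH Hy ->]]|/eqP ->]; [exact: HV|].
Qed.

Variable S : {fset G}.
Let lnB n := ln (#|` ball_gen S n|%:R : R).

Lemma card_ball_gen_gt0 n : (0 < #|` ball_gen S n|)%nat.
Proof. by rewrite card_fset_pow_gt0 // !inE eqxx !orbT. Qed.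

Let card_ball_gt0 n : 0 < #|` ball_gen S n|%:R :> R.
Proof. by rewrite ltr0n card_ball_gen_gt0. Qed.

Let lnB_ge0 n : 0 <= lnB n.
Proof. by rewrite ln_ge0 // ler1n -(ltr0n R). Qed.

Let lnB_nondecr : {homo lnB : m n / (m <= n)%nat >-> m <= n}.
Proof.
move=> m n mn; rewrite ler_ln ?posrE // ler_nat fsubset_leq_card //.
by rewrite fset_pow_subset // !inE eqxx !orbT.
Qed.

Let lnB_subadd m n : lnB (m + n) <= lnB m + lnB n.
Proof.
rewrite -lnM ?posrE // ler_ln ?posrE ?mulr_gt0 // -natrM ler_nat.
exact: card_fset_powD.
Qed.

Lemma cvg_growth_rate : (fun n => lnB n / n%:R) @ \oo --> growth_rate S.
Proof. exact: cvg_inf_ratio. Qed.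

Lemma growth_rate_le n : (0 < n)%nat -> growth_rate S <= lnB n / n%:R.
Proof. exact: inf_ratio_le. Qed.

Lemma fg_exp_growthE : fg_exp_growth S <-> 0 < growth_rate S.
Proof.
have cvg_root : (fun n : nat => powR (#|` ball_gen S n|%:R : R) n%:R^-1) @ \oo
    --> expR (growth_rate S).
  have -> : (fun n : nat => powR (#|` ball_gen S n|%:R : R) n%:R^-1) =
      expR \o (fun n => lnB n / n%:R).
    by apply: funext => n /=; rewrite /powR gt_eqF // mulrC.
  by apply: continuous_cvg; [exact: continuous_expR | exact: cvg_growth_rate].
split=> [[l [l_gt1 cvg_l]]|rate_gt0].
  by rewrite -expR_gt1 -(cvg_unique (@norm_hausdorff _ R^o) cvg_l cvg_root).
by exists (expR (growth_rate S)); rewrite expR_gt1.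
Qed.

End GrowthRate.

Lemma not_has_exp_growth1 (G : groupType) : ~ has_exp_growth [set 1%g : G].
Proof.
move=> [S [S1 /fg_exp_growthE]]; apply/negP; rewrite -leNgt.
have ball_le1 : (#|` ball_gen S 1| <= 1)%nat.
  rewrite -(cardfs1 (1%g : G)) fsubset_leq_card //; apply/fsubsetP => x.
  by move/(ball_gen_sub_subgroup (@is_subgroup1 G) S1) => ->; rewrite fset11.
apply: le_trans (growth_rate_le S (ltn0Sn 0)) _.
apply: mulr_le0_ge0; last by rewrite invr_ge0 ler0n.
by apply: ln_le0; rewrite -(ler_nat R) in ball_le1.
Qed.

Lemma powR_le_card_fset_pow (G : groupType) (U : {fset G}) (a b : R) n :
  0 <= a -> 0 < b -> a * #|` U|%:R <= 1 ->
  powR (a * #|` U|%:R) (b * n%:R) <= #|` fset_pow U n|%:R.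
Proof.
move=> a_ge0 b_gt0 aU_le1.
have [->|[u uU]] := fset_0Vmem U.
  rewrite cardfs0 mulr0; case: n => [|n]; first by rewrite mulr0 powRr0 /= cardfs1.
  by rewrite powR0 // mulf_neq0 ?gt_eqF ?ltr0n.
have aU_ge0 : 0 <= a * #|` U|%:R by rewrite mulr_ge0.
have bn_ge0 : 0 <= b * n%:R := mulr_ge0 (ltW b_gt0) (ler0n _ _).
apply: (le_trans (ge0_ler_powR bn_ge0 _ _ aU_le1)); rewrite ?nnegrE //.
rewrite powR1 ler1n cardfs_gt0; apply/fset0Pn.
by exists (u ^+ n)%g; exact: expg_in_fset_pow.
Qed.

Lemma powR_le_root (x y b : R) k :
  0 <= x -> 0 <= y -> y <= x ^+ k.+1 -> 0 <= b -> powR y (b / k.+1%:R) <= powR x b.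
Proof.
move=> x_ge0 y_ge0 yx b_ge0.
have -> : powR x b = powR (x ^+ k.+1) (b / k.+1%:R).
  by rewrite -powR_mulrn // -powRrM mulrCA mulfV ?mulr1 // pnatr_eq0.
by apply: ge0_ler_powR; rewrite ?nnegrE ?exprn_ge0 ?divr_ge0.
Qed.

Lemma dominant_factor (m B u : nat) (I : {set 'I_m}) (v : 'I_m -> nat) :
  (expn B m < u)%nat -> (u <= \prod_i (if i \in I then v i else B))%nat ->
  exists2 j, j \in I & (u <= expn (v j) m.+1)%nat.
Proof.
move=> Bm_lt_u u_le.
pose A := (\max_(i in I) v i)%nat.
have u_le_max : (u <= expn (maxn A B) m)%nat.
  rewrite -iter_muln_1 -big_const_ord.
  apply: (leq_trans u_le); apply: leq_prod => i _.
  by case: ifP => iI; rewrite leq_max ?leqnn ?orbT // (leq_bigmax_cond _ iI).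
have B_lt_A : (B < A)%nat.
  rewrite ltnNge; apply/negP => AB; move: u_le_max.
  by rewrite (maxn_idPr AB) leqNgt Bm_lt_u.
have I_gt0 : (0 < #|I|)%nat.
  by rewrite card_gt0; apply: contraTneq B_lt_A => I0; rewrite /A I0 big_set0 ltn0.
have [j jI Aj] := eq_bigmax_cond v I_gt0.
exists j => //; apply: (leq_trans u_le_max).
rewrite (maxn_idPl (ltnW B_lt_A)) /A Aj leq_pexp2l //.
by rewrite -Aj (leq_ltn_trans _ B_lt_A).
Qed.

(* growth_const * |U| > 1 forces |U| > B^m, so that U cannot be separated by the
   cosets of the T_i alone (see dominant_factor); the factor alpha^(m+1) is what
   the final estimate loses. *)
Definition growth_const (m B : nat) (alpha : R) : R :=
  Num.min (alpha ^+ m.+1) ((expn B m).+1%:R)^-1.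

Lemma growth_const_gt0 m B alpha : 0 < alpha -> 0 < growth_const m B alpha.
Proof. by move=> alpha_gt0; rewrite lt_min exprn_gt0 // invr_gt0 ltr0n. Qed.

Section DirectProduct.
Variables (m : nat) (Gs : 'I_m -> groupType).
Local Notation PG := (prodG Gs).

Lemma coordM (x y : PG) i : (x * y)%g i = (x i * y i)%g.
Proof. by rewrite /= ffunE. Qed.

Lemma coord1 i : (1%g : PG) i = 1%g.
Proof. by rewrite /= ffunE. Qed.

Lemma coordV (x : PG) i : (x^-1)%g i = (x i)^-1%g.
Proof. by rewrite /= ffunE. Qed.

Lemma coordX (x : PG) n i : (x ^+ n)%g i = (x i ^+ n)%g.
Proof. by elim: n => [|n IHn]; rewrite ?expg0 ?coord1 // !expgS coordM IHn. Qed.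

Definition coord_fset i (A : {fset PG}) : {fset Gs i} :=
  [fset (x : PG) i | x in A]%fset.

Lemma card_fset_le_prod (A : {fset PG}) (W : forall i, {fset Gs i}) :
  (forall x, x \in A -> forall i, x i \in W i) -> (#|` A| <= \prod_i #|` W i|)%nat.
Proof.
move=> AW.
pose code (x : A) : {dffun forall i, W i} := [ffun i => FSetSub (AW _ (fsvalP x) i)].
have code_inj : injective code.
  move=> x y /ffunP eq_code; apply/val_inj/ffunP => i.
  by have := eq_code i; rewrite !ffunE => /(congr1 val).
rewrite cardfE (leq_trans (leq_card _ code_inj)) //.
rewrite card_dep_ffun foldrE big_map big_enum /=.
by under eq_bigr do rewrite -cardfE.
Qed.

Lemma card_ball_prod (S : {fset PG}) n :
  (#|` ball_gen S n| <= \prod_i #|` ball_gen (coord_fset i S) n|)%nat.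
Proof.
apply: card_fset_le_prod => x xB i.
have gens_coord : ([fset (u : PG) i | u in S `|` [fset u^-1 | u in S] `|` [fset 1]]
    `<=` coord_fset i S `|` [fset y^-1 | y in coord_fset i S] `|` [fset 1])%fset%g.
  apply/fsubsetP => _ /imfsetP [u /= + ->].
  rewrite !inE => /orP [/orP [uS|/imfsetP [v /= vS ->]]|/eqP ->].
  - by rewrite in_imfset.
  - by rewrite coordV in_imfset ?orbT // in_imfset.
  - by rewrite coord1 eqxx !orbT.
apply: (fsubsetP (fset_powS n gens_coord)).
by rewrite (fset_pow_imfset (fun u v => coordM u v i) (coord1 i)) in_imfset.
Qed.

Lemma growth_rate_prod (S : {fset PG}) :
  growth_rate S <= \sum_i growth_rate (coord_fset i S).
Proof.
have lnK_ball (G : groupType) (T : {fset G}) k :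
    expR (ln (#|` ball_gen T k|%:R)) = #|` ball_gen T k|%:R :> R.
  by rewrite lnK // posrE ltr0n card_ball_gen_gt0.
have cvg_sum : (fun n => \sum_i ln (#|` ball_gen (coord_fset i S) n|%:R) / n%:R)
    @ \oo --> \sum_i growth_rate (coord_fset i S).
  apply: cvg_big => [|i _]; [exact: (@add_continuous R^o) | exact: cvg_growth_rate].
apply: (ler_cvg_to (@cvg_growth_rate _ S) cvg_sum); apply: nearW => n.
rewrite -mulr_suml ler_wpM2r ?invr_ge0 ?ler0n //.
rewrite -ler_expR expR_sum lnK_ball; under eq_bigr do rewrite lnK_ball.
by rewrite -natr_prod ler_nat card_ball_prod.
Qed.

Definition box (K : forall i, set (Gs i)) : set PG := [set x | forall i, K i (x i)].

Definition box_on (I : {set 'I_m}) (K : forall i, set (Gs i)) : set PG :=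
  box (fun i => if i \in I then K i else [set 1%g]).

Definition coord_gen (U : {fset PG}) i : set (Gs i) := gen [set y | y \in coord_fset i U].
Arguments coord_gen U i : clear implicits.

Lemma is_subgroup_box (K : forall i, set (Gs i)) :
  (forall i, is_subgroup (K i)) -> is_subgroup (box K).
Proof.
move=> Ksub; split=> [i|]; first by rewrite coord1; case: (Ksub i).
split=> [x y Kx Ky i|x Kx i]; have [_ [KM KV]] := Ksub i.
  by rewrite coordM; apply: KM.
by rewrite coordV; apply: KV.
Qed.

Lemma is_subgroup_box_on (I : {set 'I_m}) (K : forall i, set (Gs i)) :
  (forall i, is_subgroup (K i)) -> is_subgroup (box_on I K).
Proof.
move=> Ksub; apply: is_subgroup_box => i.
by case: ifP => _; [exact: Ksub | exact: is_subgroup1].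
Qed.

Lemma box_not_exp_growth (K : forall i, set (Gs i)) :
  (forall i, ~ has_exp_growth (K i)) -> ~ has_exp_growth (box K).
Proof.
move=> Knoexp [S [SK /fg_exp_growthE]]; apply/negP; rewrite -leNgt.
apply: (le_trans (growth_rate_prod S)); apply: sumr_le0 => i _.
rewrite leNgt; apply/negP => /fg_exp_growthE S_exp; apply: (Knoexp i).
by exists (coord_fset i S); split=> // _ /imfsetP [x /= /SK Kx ->].
Qed.

Lemma box_on_not_exp_growth (I : {set 'I_m}) (K : forall i, set (Gs i)) :
  (forall i, i \in I -> ~ has_exp_growth (K i)) -> ~ has_exp_growth (box_on I K).
Proof.
move=> Knoexp; apply: box_not_exp_growth => i.
by case: ifPn => [/Knoexp //|_]; exact: not_has_exp_growth1.
Qed.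

Lemma box_on_commute (I : {set 'I_m}) (K L : forall i, set (Gs i)) x y :
  box_on I K x -> box_on (~: I) L y -> (x * y = y * x)%g.
Proof.
move=> Kx Ly; apply/ffunP => i; rewrite !coordM.
have := Kx i; have := Ly i; rewrite inE.
by case: (i \in I) => /= [-> _|_ ->]; rewrite ?mulg1 ?mul1g.
Qed.

Lemma box_on_trivI (I : {set 'I_m}) (K L : forall i, set (Gs i)) x :
  box_on I K x -> box_on (~: I) L x -> x = 1%g.
Proof.
move=> Kx Lx; apply/ffunP => i; rewrite coord1.
by have := Kx i; have := Lx i; rewrite inE; case: (i \in I) => /= [-> _|_ ->].
Qed.

Lemma box_on_split (I : {set 'I_m}) (K : forall i, set (Gs i)) x :
  (forall i, K i 1%g) -> box K x ->
  exists h1 h2, [/\ box_on I K h1, box_on (~: I) K h2 & x = (h1 * h2)%g].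
Proof.
move=> K1 Kx.
exists [ffun i => if i \in I then x i else 1%g], [ffun i => if i \in I then 1%g else x i].
split=> [i|i|]; last first.
  by apply/ffunP => i; rewrite coordM !ffunE; case: (i \in I); rewrite ?mulg1 ?mul1g.
all: by rewrite ffunE ?inE; case: (i \in I) => //=; exact: Kx.
Qed.

Lemma gen_sub_box (U : {fset PG}) : gen [set x | x \in U] `<=` box (coord_gen U).
Proof.
apply: gen_subG; first by apply: is_subgroup_box => i; exact: is_subgroup_gen.
by move=> u uU i; apply: subset_gen; exact: in_imfset.
Qed.

Definition exp_coords (U : {fset PG}) : {set 'I_m} :=
  [set i : 'I_m | `[< has_exp_growth (coord_gen U i) >]]%SET.

Lemma virtually_torsion_free_cosets :
  (forall i, virtually_torsion_free (Gs i)) ->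
  exists (Hs : forall i, set (Gs i)) (reps : forall i, seq (Gs i)),
    [/\ forall i, is_subgroup (Hs i), forall i, torsion_free (Hs i) &
        forall i g, exists2 t, t \in reps i & Hs i (t^-1 * g)%g].
Proof.
move=> vtf; pose Hs i := projT1 (cid (vtf i)).
have Hs_spec i : [/\ is_subgroup (Hs i), finite_index (Hs i) & torsion_free (Hs i)].
  exact: projT2 (cid (vtf i)).
have Hs_fi i : finite_index (Hs i) by case: (Hs_spec i).
exists Hs, (fun i => projT1 (cid (Hs_fi i))).
split=> [i|i|i]; [by case: (Hs_spec i) | by case: (Hs_spec i) |].
exact: projT2 (cid (Hs_fi i)).
Qed.

Section FiniteKernel.
(* Otherwise the index of Hs and reps below would become an implicit argument. *)
Local Unset Implicit Arguments.
Variables (Hs : forall i, set (Gs i)) (reps : forall i, seq (Gs i)).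
Hypothesis Hs_subgroup : forall i, is_subgroup (Hs i).
Hypothesis Hs_torsion_free : forall i, torsion_free (Hs i).
Hypothesis reps_cover : forall i g, exists2 t, t \in reps i & Hs i (t^-1 * g)%g.

Lemma finite_subgroup_box_trivial (K : set PG) z :
  is_subgroup K -> finite_set K -> K z -> box Hs z -> z = 1%g.
Proof.
move=> Ksub Kfin Kz Hz; have [k k_gt0 zk1] := finite_subgroup_torsion Ksub Kfin Kz.
apply/ffunP => i; rewrite coord1; apply: (Hs_torsion_free i _ k (Hz i) k_gt0).
by rewrite -coordX zk1 coord1.
Qed.

Let rep i g := s2val (cid2 (reps_cover i g)).
Let rep_in i g : rep i g \in reps i := s2valP (cid2 (reps_cover i g)).
Let rep_coset i g : Hs i ((rep i g)^-1 * g)%g := s2valP' (cid2 (reps_cover i g)).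

Lemma card_le_of_finite_kernel (U : {fset PG}) (I : {set 'I_m}) :
  finite_set (gen [set x | x \in U] `&` box_on (~: I) (coord_gen U)) ->
  (#|` U| <= \prod_i (if i \in I then #|` coord_fset i U| else size (reps i)))%nat.
Proof.
move=> ker_fin.
pose code (u : PG) : PG := [ffun i => if i \in I then u i else rep i (u i)].
have code_inj : {in U &, injective code}.
  move=> u v uU vU /ffunP eq_code.
  have coord_eq i : i \in I -> u i = v i.
    by move=> iI; have := eq_code i; rewrite !ffunE iI.
  have gen_uv : gen [set x | x \in U] (u^-1 * v)%g.
    have [_ [gM gV]] := is_subgroup_gen [set x | x \in U].
    by apply: gM; [apply: gV|]; apply: subset_gen.
  suff : (u^-1 * v)%g = 1%g by move/mulg1_eq; rewrite invgK.
  apply: (finite_subgroup_box_trivial _ _ _ ker_fin).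
  - apply: is_subgroupI; first exact: is_subgroup_gen.
    by apply: is_subgroup_box_on => i; exact: is_subgroup_gen.
  - split=> // i; rewrite inE; case: ifPn => [_|/negPn iI]; first exact: gen_sub_box.
    by rewrite /= coordM coordV coord_eq ?mulVg.
  - move=> i; rewrite coordM coordV; have [H1 [HM HV]] := Hs_subgroup i.
    case: (boolP (i \in I)) => iI; first by rewrite coord_eq ?mulVg.
    have rep_eq : rep i (u i) = rep i (v i).
      by have := eq_code i; rewrite !ffunE (negbTE iI).
    have := HM _ _ (HV _ (rep_coset i (u i))) (rep_coset i (v i)).
    by rewrite rep_eq invgM invgK -mulgA mulVKg.
have /card_in_imfsetP/eqP <- := code_inj.
pose W i := if i \in I then coord_fset i U else [fset t | t in reps i]%fset.
apply: (@leq_trans (\prod_i #|` W i|)).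
  apply: card_fset_le_prod => _ /imfsetP [u /= uU ->] i.
  rewrite /W ffunE; case: ifP => _; apply/imfsetP.
    by exists u => //; exact: uU.
  by exists (rep i (u i)) => //; exact: rep_in.
apply: leq_prod => i _; rewrite /W; case: ifP => // _.
by rewrite card_fseq size_undup.
Qed.

Variables (alpha beta : R).
Hypothesis alpha_gt0 : 0 < alpha.
Hypothesis beta_gt0 : 0 < beta.
Hypothesis growth_coord : forall i (V : {fset Gs i}),
  has_exp_growth (gen [set x | x \in V]) ->
  forall n, powR (alpha * #|` V|%:R) (beta * n%:R) <= #|` fset_pow V n|%:R.

Lemma growth_of_finite_kernel (U : {fset PG}) :
  finite_set (gen [set x | x \in U] `&` box_on (~: exp_coords U) (coord_gen U)) ->
  forall n, powR (growth_const m (\max_i size (reps i)) alpha * #|` U|%:R)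
                 (beta / m.+1%:R * n%:R) <= #|` fset_pow U n|%:R.
Proof.
move=> ker_fin n.
set B := (\max_i size (reps i))%nat; set a' := growth_const m B alpha.
set u := #|` U|.
have a'_gt0 : 0 < a' := growth_const_gt0 m B alpha_gt0.
have [small|large] := lerP (a' * u%:R) 1.
  by apply: (powR_le_card_fset_pow _ (ltW a'_gt0) _ small); rewrite divr_gt0 ?ltr0n.
have Bm_lt_u : (expn B m < u)%nat.
  have a'_le : a' <= ((expn B m).+1%:R)^-1 by rewrite /a' /growth_const ge_min lexx orbT.
  have := lt_le_trans large (ler_wpM2r (ler0n _ u) a'_le).
  by rewrite mulrC ltr_pdivlMr ?ltr0n // mul1r ltr_nat => /ltnW.
have u_le : (u <= \prod_i (if i \in exp_coords U then #|` coord_fset i U| else B))%nat.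
  apply: (leq_trans (card_le_of_finite_kernel _ _ ker_fin)); apply: leq_prod => i _.
  by case: ifP => // _; exact: (leq_bigmax i).
have [j jI u_le_vj] := dominant_factor Bm_lt_u u_le.
have Vj_exp : has_exp_growth (coord_gen U j) by move: jI; rewrite inE => /asboolP.
apply: (le_trans _ (le_trans (growth_coord j _ Vj_exp n) _)); last first.
  by rewrite ler_nat (card_fset_pow_imfset (fun x y => coordM x y j) (coord1 j)).
rewrite mulrAC; apply: powR_le_root.
- exact: mulr_ge0 (ltW alpha_gt0) (ler0n _ _).
- exact: mulr_ge0 (ltW a'_gt0) (ler0n _ _).
- rewrite exprMn; apply: ler_pM; [exact: ltW | exact: ler0n | by rewrite ge_min lexx |].
  by rewrite -natrX ler_nat.
- exact: mulr_ge0 (ltW beta_gt0) (ler0n _ _).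
Qed.

End FiniteKernel.

End DirectProduct.

Theorem proposition2p28 (m : nat) (Gs : 'I_m -> groupType)
  (hvtf : forall i : 'I_m, virtually_torsion_free (Gs i))
  (alpha beta : R) (halpha : 0 < alpha) (hbeta : 0 < beta)
  (hgrowth : forall (i : 'I_m) (V : {fset Gs i}),
     has_exp_growth (gen [set x | x \in V]) ->
     forall n : nat,
       powR (alpha * (#|` V|%:R)) (beta * n%:R) <= (#|` fset_pow V n|%:R)) :
  exists alpha' beta' : R, [/\ 0 < alpha', 0 < beta' &
    forall U : {fset prodG Gs},
      (exists H1 H2 : set (prodG Gs),
        [/\ is_subgroup H1 /\ is_subgroup H2,
            (forall h1 h2, H1 h1 -> H2 h2 -> (h1 * h2 = h2 * h1)%g)
              /\ (forall x, H1 x -> H2 x -> x = 1%g),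
            gen [set x | x \in U] `<=`
              [set x | exists h1 h2, [/\ H1 h1, H2 h2 & x = (h1 * h2)%g]],
            ~ has_exp_growth H2 &
            (* kernel of the projection H1 x H2 -> H1 restricted to <U> *)
            infinite_set (gen [set x | x \in U] `&` H2)])
      \/
      (forall n : nat,
         powR (alpha' * (#|` U|%:R)) (beta' * n%:R) <= (#|` fset_pow U n|%:R))].
Proof.
have [Hs [reps [Hs_subgroup Hs_torsion_free reps_cover]]] :=
  virtually_torsion_free_cosets hvtf.
exists (growth_const m (\max_i size (reps i)) alpha), (beta / m.+1%:R).
split=> [||U]; [exact: growth_const_gt0 | by rewrite divr_gt0 ?ltr0n |].
set I := exp_coords U; set K := coord_gen U.
have K_subgroup i : is_subgroup (K i) by exact: is_subgroup_gen.
have [ker_fin|ker_inf] :=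
  pselect (finite_set (gen [set x | x \in U] `&` box_on (~: I) K)).
  right; exact: (growth_of_finite_kernel _ _ _ _ Hs_subgroup Hs_torsion_free
                   reps_cover _ _ halpha hbeta hgrowth _ ker_fin).
left; exists (box_on I K), (box_on (~: I) K); split=> //.
- by split; exact: is_subgroup_box_on.
- by split; [exact: box_on_commute | exact: box_on_trivI].
- by move=> x /gen_sub_box; apply: box_on_split => i; case: (K_subgroup i).
- by apply: box_on_not_exp_growth => i; rewrite !inE => /asboolPn.
Qed.
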